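(* Let $\langle W,\varphi,(Y,\mathbb S,\sigma)\rangle$ be a monotone one-dimensional cocycle with skew-product system $(X,\mathbb S_+,\pi)$, $h=\mathrm{pr}_2$, and let $\tau\in\mathbb S_+$, $\tau>0$. Assume: (1) the discretization with step $\tau$ is strictly monotone, i.e. $u_1<u_2$ implies $\varphi(k\tau,u_1,y)<\varphi(k\tau,u_2,y)$ for all $k\in\mathbb N$, $y\in Y$; (2) $x_0\in X$ has precompact semi-trajectory $\{\pi(t,x_0):t\in\mathbb S_+\}$; (3) $y_0:=h(x_0)$ is asymptotically $\tau$-periodic. Let $q:=\lim_{k\to\infty}\sigma(k\tau,y_0)$, $X_q=h^{-1}(q)$, $\tilde\omega_{x_0}:=\omega_{x_0}\cap X_q$ and $P:=\pi(\tau,\cdot)$. Then: (i) $\omega_{x_0}$ is nonempty, compact and invariant ($\pi(t,\omega_{x_0})=\omega_{x_0}$ for $t\in\mathbb S_+$); (ii) $h(\omega_{x_0})=\omega_{y_0}$; (iii) $P(\tilde\omega_{x_0})=\tilde\omega_{x_0}$; (iv) every point of $\tilde\omega_{x_0}$ is $\tau$-periodic, i.e. $P(x)=x$ for all $x\in\tilde\omega_{x_0}$.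
   Context: $\mathbb S=\mathbb R$ or $\mathbb Z$, $\mathbb S_+=\{t\in\mathbb S:t\ge0\}$. $(Y,\mathbb S,\sigma)$ is a two-sided dynamical system on a complete metric space $Y$; $y$ is $\tau$-periodic if $\sigma(\tau,y)=y$, and $y_0$ is asymptotically $\tau$-periodic if there is a $\tau$-periodic $q$ with $\rho(\sigma(t,y_0),\sigma(t,q))\to0$ as $t\to+\infty$ (then $q=\lim_k\sigma(k\tau,y_0)$). $W\subseteq\mathbb R$ is an interval. A cocycle over $\sigma$ with fibre $W$ is a continuous $\varphi:\mathbb S_+\times W\times Y\to W$ with $\varphi(0,u,y)=u$, $\varphi(t+s,u,y)=\varphi(t,\varphi(s,u,y),\sigma(s,y))$; monotone means $u_1\le u_2\Rightarrow\varphi(t,u_1,y)\le\varphi(t,u_2,y)$. Skew-product: $X=W\times Y$, $\pi(t,(u,y))=(\varphi(t,u,y),\sigma(t,y))$, $h(u,y)=y$. $\omega_x$ ($\omega_y$) is the set of limits of $\pi(t_k,x)$ ($\sigma(t_k,y)$) with $t_k\to+\infty$, $t_k\in\mathbb S_+$. A point $x\in X$ is $\tau$-periodic if $\pi(\tau,x)=x$. *)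

From HB Require Import structures.
From mathcomp Require Import all_boot all_order all_algebra.
From mathcomp Require Import all_classical all_reals all_analysis.
Set Implicit Arguments. Unset Strict Implicit. Unset Printing Implicit Defensive.
Import Order.TTheory GRing.Theory Num.Theory.
Import numFieldNormedType.Exports.
Local Open Scope classical_set_scope.
Local Open Scope ring_scope.

(* The time set S is encoded as a subset of R:
   discrete = true  : S = Z (integers embedded in R),
   discrete = false : S = R. *)
Definition inS {R : realType} (discrete : bool) (t : R) : Prop :=
  if discrete then exists z : int, t = z%:~R else True.

Definition inSp {R : realType} (discrete : bool) (t : R) : Prop :=
  inS discrete t /\ 0 <= t.

Definition dyn_system {R : realType} {Y : topologicalType} (discrete : bool)
  (sigma : R -> Y -> Y) : Prop :=
  [/\ forall y, sigma 0 y = y,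
      forall t s y, inS discrete t -> inS discrete s ->
        sigma (t + s) y = sigma t (sigma s y)
    & {within [set z : R * Y | inS discrete z.1],
        continuous (fun z : R * Y => sigma z.1 z.2)}].

Definition cocycle {R : realType} {Y : topologicalType} (discrete : bool)
  (W : set R) (sigma : R -> Y -> Y) (phi : R -> R -> Y -> R) : Prop :=
  [/\ forall t u y, inSp discrete t -> W u -> W (phi t u y),
      forall u y, W u -> phi 0 u y = u,
      forall t s u y, inSp discrete t -> inSp discrete s -> W u ->
        phi (t + s) u y = phi t (phi s u y) (sigma s y)
    & {within [set z : R * R * Y | inSp discrete z.1.1 /\ W z.1.2],
        continuous (fun z : R * R * Y => phi z.1.1 z.1.2 z.2)}].

Definition monotone_cocycle {R : realType} {Y : Type} (discrete : bool)
  (W : set R) (phi : R -> R -> Y -> R) : Prop :=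
  forall t u1 u2 y, inSp discrete t -> W u1 -> W u2 -> u1 <= u2 ->
    phi t u1 y <= phi t u2 y.

Definition skew_prod {R : realType} {Y : Type} (sigma : R -> Y -> Y)
  (phi : R -> R -> Y -> R) (t : R) (x : R * Y) : R * Y :=
  (phi t x.1 x.2, sigma t x.2).

Definition Xsp {R : realType} {Y : Type} (W : set R) : set (R * Y) :=
  [set x | W x.1].

Definition times_to_infty {R : realType} (discrete : bool) (tk : nat -> R) : Prop :=
  (forall k, inSp discrete (tk k)) /\
  (forall M : R, exists N : nat, forall k, (N <= k)%N -> M <= tk k).

Definition omega_lim {R : realType} {T : topologicalType} (discrete : bool)
  (A : set T) (f : R -> T -> T) (x : T) : set T :=
  [set p | A p /\ exists tk : nat -> R, times_to_infty discrete tk /\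
      (fun k => f (tk k) x) @ \oo --> p].

Definition semi_traj {R : realType} {T : Type} (discrete : bool)
  (f : R -> T -> T) (x : T) : set T :=
  [set f t x | t in inSp discrete].

Definition precompact_in {T : topologicalType} (A B : set T) : Prop :=
  exists K, [/\ compact K, K `<=` A & B `<=` K].

Definition periodic_pt {R : realType} {Y : Type} (sigma : R -> Y -> Y)
  (tau : R) (y : Y) : Prop := sigma tau y = y.

Definition asympt_periodic {R : realType} {Y : pseudoMetricType R}
  (discrete : bool) (sigma : R -> Y -> Y) (tau : R) (y0 : Y) : Prop :=
  exists q, periodic_pt sigma tau q /\
    forall e : R, 0 < e -> exists T : R, forall t, inSp discrete t -> T <= t ->
      ball (sigma t y0) e (sigma t q).

From HB Require Import structures.
From mathcomp Require Import all_boot all_order all_algebra.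
From mathcomp Require Import all_classical all_reals all_analysis.
From mathcomp Require Import lra ring.
Import Order.TTheory GRing.Theory Num.Theory.
Import numFieldNormedType.Exports.
Local Open Scope classical_set_scope.
Local Open Scope ring_scope.

(* Parts (i)-(ii) are standard facts about the omega-limit set of a precompact
   semi-trajectory of a skew product, and (iii) follows from (iv).  For (iv),
   let (u, q) be in the fibre of the omega-limit set over q and suppose, say,
   phi(tau, u, q) > u.  Choose a threshold c slightly above u that is still
   pushed up, phi(tau, c, q) > c.  By continuity and monotonicity, every passage
   of the trajectory close to (u, q), late enough for sigma(t + k tau, y0) to
   stay close to q (asymptotic periodicity), is followed by values above c at
   all times t + k tau, k >= 1.  Such passages recur at arbitrarily late times,
   so by pigeonhole on their phases modulo tau there are two of them, a and b,
   with b close to a + k tau.  Continuity in time then forces the value at b to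
   be both close to u and at least about c: a contradiction. *)

Set Implicit Arguments. Unset Strict Implicit. Unset Printing Implicit Defensive.

Section Metric.
Variable R : realType.

Lemma within_continuous_ball (T U : pseudoMetricType R) (D : set T) (g : T -> U) x :
  {within D, continuous g} -> D x -> forall e, 0 < e ->
  exists2 d, 0 < d & forall z, D z -> ball x d z -> ball (g x) e (g z).
Proof.
move=> /subspace_continuousP cg Dx e e0.
move/cvg_ballP: (cg x Dx) => /(_ e e0) /nbhs_ballP [d d0 H].
by exists d => // z Dz bz; exact: H.
Qed.

Lemma ball_realE (x y e : R) : ball x e y <-> `|x - y| < e.
Proof. by rewrite -ball_normE. Qed.

Lemma hausdorff_ball_eq (T : pseudoMetricType R) (x y : T) : hausdorff_space T ->
  (forall e, 0 < e -> ball x e y) -> x = y.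
Proof. by move=> hT H; rewrite -closeE // ball_close => e; exact: H. Qed.

Lemma hausdorff_prod (U V : pseudoMetricType R) :
  hausdorff_space U -> hausdorff_space V -> hausdorff_space (U * V)%type.
Proof.
move=> hU hV [a b] [c d] cl.
have ball_ac_bd e : 0 < e -> ball (a, b) e (c, d).
  move=> e0; have e20 : 0 < e / 2 by rewrite divr_gt0.
  have [z [z1 z2]] := cl _ _ (nbhsx_ballx _ _ e20) (nbhsx_ballx _ _ e20).
  by rewrite (splitr e); apply: ball_triangle z1 (ball_sym z2).
by congr pair; apply: hausdorff_ball_eq => // e /ball_ac_bd [].
Qed.

Lemma near_infty_natP (P : nat -> Prop) :
  (\forall k \near \oo, P k) <-> exists N, forall k, (N <= k)%N -> P k.
Proof.
split; first by move=> [N _ HN]; exists N => k Nk; apply: HN.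
by move=> [N HN]; exists N => // k /= Nk; apply: HN.
Qed.

Lemma le_truncnS (M : R) n : ((Num.truncn M).+1 <= n)%N -> M <= n%:R.
Proof. by move=> h; apply: le_trans (ltW (truncnS_gt M)) _; rewrite ler_nat. Qed.

Lemma natSinv_lt (e : R) : 0 < e -> exists N, forall n, (N <= n)%N -> n.+1%:R^-1 < e.
Proof.
move=> e0; exists (Num.truncn e^-1) => n Nn.
rewrite -(invrK e) ltf_pV2 ?posrE ?ltr0n ?invr_gt0 //.
by apply: lt_le_trans (truncnS_gt _) _; rewrite ler_nat.
Qed.

Lemma compact_cluster_seq (T : pseudoMetricType R) (K : set T) (z : nat -> T) :
  compact K -> (forall n, K (z n)) ->
  exists p, K p /\ forall e, 0 < e -> forall N, exists2 n, (N <= n)%N & ball p e (z n).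
Proof.
move=> cK Kz; have [|p [Kp clp]] := cK (z @ \oo) _ _.
  by apply/near_infty_natP; exists 0%N => k _; apply: Kz.
exists p; split => // e e0 N.
have tail : (z @ \oo) [set y | exists2 n, (N <= n)%N & y = z n].
  by apply/near_infty_natP; exists N => k Nk; exists k.
have [y [[n Nn ->] b]] := clp _ _ tail (nbhsx_ballx _ _ e0).
by exists n => //; apply: ball_sym.
Qed.

Lemma cluster_ball_cvg_eq (T : pseudoMetricType R) (z : nat -> T) p p' :
  hausdorff_space T -> (forall n, ball p n.+1%:R^-1 (z n)) ->
  (forall e, 0 < e -> forall N, exists2 n, (N <= n)%N & ball p' e (z n)) -> p' = p.
Proof.
move=> hT zp clp; apply: hausdorff_ball_eq => // e e0.
have e20 : 0 < e / 2 by rewrite divr_gt0.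
have [N HN] := natSinv_lt e20; have [n Nn b] := clp _ e20 N.
rewrite (splitr e); apply: ball_triangle b (ball_sym _).
by apply: (le_ball (ltW (HN _ Nn))); exact: zp.
Qed.

Lemma omega_limP (T : pseudoMetricType R) discrete (A : set T) (f : R -> T -> T) x p :
  omega_lim discrete A f x p <-> A p /\ (forall e, 0 < e -> forall M,
     exists t, [/\ inSp discrete t, M <= t & ball p e (f t x)]).
Proof.
split.
  move=> [Ap [tk [[tS tinf] cv]]]; split => // e e0 M.
  have [N1 H1] := tinf M.
  have [N2 H2] : exists N, forall k, (N <= k)%N -> ball p e (f (tk k) x).
    by apply/near_infty_natP; move/cvg_ballP: cv; apply.
  exists (tk (maxn N1 N2)); split => //.
    by apply: H1; rewrite leq_maxl.
  by apply: H2; rewrite leq_maxr.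
move=> [Ap H]; split => //.
have H' n : exists t, [/\ inSp discrete t, n%:R <= t & ball p n.+1%:R^-1 (f t x)].
  by apply: H; rewrite invr_gt0 ltr0n.
pose tk n := projT1 (cid (H' n)).
have tkP n : [/\ inSp discrete (tk n), n%:R <= tk n & ball p n.+1%:R^-1 (f (tk n) x)].
  exact: projT2 (cid (H' n)).
exists tk; split; first split.
- by move=> n; case: (tkP n).
- move=> M; exists (Num.truncn M).+1 => k Nk.
  by have [_ + _] := tkP k; apply: le_trans; apply: le_truncnS.
apply/cvg_ballP => e e0; apply/near_infty_natP.
have [N HN] := natSinv_lt e0; exists N => k Nk.
by have [_ _ b] := tkP k; apply: le_ball b; apply/ltW/HN.
Qed.

End Metric.

Section RecurrenceModulo.
Variable R : realType.

Lemma pigeonhole_nat (N : nat) (g : nat -> nat) : (forall i, (i <= N)%N -> (g i < N)%N) ->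
  exists i j, (i < j <= N)%N /\ g i = g j.
Proof.
move=> gN; pose G (i : 'I_N.+1) : 'I_N := Ordinal (gN i (ltn_ord i)).
have : ~~ injectiveb G by apply/injectiveP => /leq_card; rewrite !card_ord ltnn.
case/injectivePn => i [j ij /(congr1 val) /= eqg].
have iN := ltn_ord i; have jN := ltn_ord j.
case: (ltngtP i j) => [lt|lt|eij].
- by exists i, j; rewrite lt /=; split.
- by exists j, i; rewrite lt /=; split.
- by move: ij; rewrite -(inj_eq val_inj) /= eij eqxx.
Qed.

Lemma truncn_eq_dist_lt1 (x y : R) : 0 <= x -> 0 <= y ->
  Num.truncn x = Num.truncn y -> `|x - y| < 1.
Proof.
move=> x0 y0 e.
have /andP [a b] := truncn_itv x0; have /andP [c d] := truncn_itv y0.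
rewrite e in a b; rewrite -addn1 natrD in b d.
rewrite ltr_norml; apply/andP; split; lra.
Qed.

Lemma unbounded_spaced_seq (A : set R) (gap : R) : 0 <= gap ->
  (forall M, exists2 t, A t & M <= t) ->
  exists D : nat -> R, (forall i, A (D i)) /\ forall i j, (i < j)%N -> D i + gap <= D j.
Proof.
move=> gap0 unbA; pose next M := projT1 (cid2 (unbA M)).
have nextP M : A (next M) /\ M <= next M by have [] := projT2 (cid2 (unbA M)).
pose D := fix D (i : nat) : R := if i is i'.+1 then next (D i' + gap) else next 0.
exists D; split; first by case=> [|i]; [case: (nextP 0)|case: (nextP (D i + gap))].
move=> i; elim => [//|j IH]; rewrite ltnS leq_eqVlt => /orP [/eqP ->|lt].
  by have [] := nextP (D j + gap).
apply: le_trans (IH lt) _; have [_ le] := nextP (D j + gap).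
by apply: le_trans le; rewrite lerDl.
Qed.

(* Pigeonhole on the fractional parts of [D i / tau]. *)
Lemma spaced_seq_near_multiple (D : nat -> R) (tau dl : R) : 0 < tau -> 0 < dl ->
  (forall i j, (i < j)%N -> D i + tau <= D j) ->
  exists i j (k : nat), `|D j - (D i + k.+1%:R * tau)| < dl.
Proof.
move=> tau0 dl0 gapD.
pose N := (Num.truncn (tau / dl)).+1.
have N0 : 0 < N%:R :> R by rewrite ltr0n.
have tauN : tau / N%:R < dl.
  by rewrite ltr_pdivrMr // mulrC -ltr_pdivrMr //; exact: truncnS_gt.
pose frac (t : R) := t / tau - (Num.floor (t / tau))%:~R.
have frac_ge0 t : 0 <= frac t by rewrite subr_ge0 floor_le.
have frac_lt1 t : frac t < 1 by rewrite ltrBlDl -intrD1 floorD1_gt.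
pose bin i := Num.truncn (frac (D i) * N%:R).
have binN i : (i <= N)%N -> (bin i < N)%N.
  move=> _; rewrite truncn_lt_nat; last by apply: mulr_ge0 => //; exact: ltW.
  by rewrite -[X in _ < X]mul1r ltr_pM2r.
have [i [j [/andP [ij _] eqb]]] := pigeonhole_nat binN.
pose m := Num.floor (D j / tau) - Num.floor (D i / tau).
pose r := D j - D i - m%:~R * tau.
have rE : r = (frac (D j) - frac (D i)) * tau.
  by rewrite /r /frac /m intrB; field; exact: lt0r_neq0.
have hfr : `|frac (D j) - frac (D i)| * N%:R < 1.
  have := truncn_eq_dist_lt1 (mulr_ge0 (frac_ge0 (D j)) (ltW N0))
    (mulr_ge0 (frac_ge0 (D i)) (ltW N0)) (esym eqb).
  by rewrite -mulrBl normrM (ger0_norm (ltW N0)).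
have hr : `|r| < dl.
  rewrite rE normrM (gtr0_norm tau0); apply: le_lt_trans tauN.
  rewrite mulrC ler_pdivlMr // -mulrA -[X in _ <= X]mulr1.
  by apply: ler_wpM2l; [exact: ltW|exact: ltW hfr].
have r_lt_tau : r < tau.
  rewrite rE -[X in _ < X]mul1r ltr_pM2r //.
  by have := frac_ge0 (D i); have := frac_lt1 (D j); lra.
have m_gt0 : 0 < m.
  rewrite -(ltr0z R) -(ltr_pM2r tau0) mul0r.
  have -> : m%:~R * tau = D j - D i - r by rewrite /r; ring.
  by have := gapD _ _ ij; lra.
have [k mk] : exists k : nat, m = k.+1.
  by move: m_gt0; case: (m) => [[|k]|] //; exists k.
exists i, j, k; have mR : m%:~R = k.+1%:R :> R by rewrite mk.
by move: hr; rewrite /r mR opprD addrA.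
Qed.

End RecurrenceModulo.

Section TimeSet.
Variables (R : realType) (discrete : bool).
Local Notation S := (@inS R discrete).
Local Notation Sp := (@inSp R discrete).

Lemma inS0 : S 0.
Proof. by rewrite /inS; case: discrete => //; exists 0. Qed.

Lemma inS1 : S 1.
Proof. by rewrite /inS; case: discrete => //; exists 1. Qed.

Lemma inSD t s : S t -> S s -> S (t + s).
Proof.
by rewrite /inS; case: discrete => // -[z1 ->] [z2 ->]; exists (z1 + z2); rewrite intrD.
Qed.

Lemma inSN t : S t -> S (- t).
Proof. by rewrite /inS; case: discrete => // -[z ->]; exists (- z); rewrite mulrNz. Qed.

Lemma inSB t s : S t -> S s -> S (t - s).
Proof. by move=> St Ss; apply/inSD/inSN. Qed.

Lemma inS_natM (k : nat) t : S t -> S (k%:R * t).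
Proof.
move=> St; elim: k => [|k IH]; first by rewrite mul0r; exact: inS0.
by rewrite mulrSr mulrDl mul1r; apply: inSD.
Qed.

Lemma inSpD t s : Sp t -> Sp s -> Sp (t + s).
Proof. by move=> [? ?] [? ?]; split; [apply: inSD|apply: addr_ge0]. Qed.

Lemma inSp_natM (k : nat) t : Sp t -> Sp (k%:R * t).
Proof. by move=> [St t0]; split; [exact: inS_natM|exact: mulr_ge0]. Qed.

Lemma inSp_nat (k : nat) : Sp k%:R.
Proof. by rewrite -[k%:R]mulr1; apply: inSp_natM; split; [exact: inS1|]. Qed.

End TimeSet.

Section SkewProduct.
Variables (R : realType) (Y : pseudoMetricType R) (discrete : bool) (W : set R)
  (sigma : R -> Y -> Y) (phi : R -> R -> Y -> R).
Hypotheses (hds : dyn_system discrete sigma) (hcoc : cocycle discrete W sigma phi).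
Local Notation S := (@inS R discrete).
Local Notation Sp := (@inSp R discrete).
Local Notation pi := (skew_prod sigma phi).

Lemma sigma0 y : sigma 0 y = y.
Proof. by case: hds. Qed.

Lemma sigmaD t s y : S t -> S s -> sigma (t + s) y = sigma t (sigma s y).
Proof. by case: hds => _ + _; apply. Qed.

Lemma phiW t u y : Sp t -> W u -> W (phi t u y).
Proof. by case: hcoc => + _ _ _; apply. Qed.

Lemma phi0 u y : W u -> phi 0 u y = u.
Proof. by case: hcoc => _ + _ _; apply. Qed.

Lemma phiD t s u y : Sp t -> Sp s -> W u ->
  phi (t + s) u y = phi t (phi s u y) (sigma s y).
Proof. by case: hcoc => _ _ + _; apply. Qed.

Lemma piW t x : Sp t -> Xsp W x -> Xsp W (pi t x).
Proof. exact: phiW. Qed.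

Lemma piD t s x : Sp t -> Sp s -> Xsp W x -> pi (t + s) x = pi t (pi s x).
Proof. by move=> [St ?] [Ss ?] Wx; rewrite /skew_prod /= phiD // sigmaD. Qed.

Lemma phi_cont t u y : Sp t -> W u -> forall e, 0 < e ->
  exists2 d, 0 < d & forall t' u' y', Sp t' -> W u' -> `|t - t'| < d ->
    `|u - u'| < d -> ball y d y' -> `|phi t u y - phi t' u' y'| < e.
Proof.
move=> St Wu e e0; case: hcoc => _ _ _ cphi.
have [d d0 H] := within_continuous_ball cphi (x := (t, u, y)) (conj St Wu) e0.
by exists d => // t' u' y' St' Wu' dt du dy; apply/ball_realE/(H (t', u', y')).
Qed.

Lemma sigma_cont t y : S t -> forall e, 0 < e ->
  exists2 d, 0 < d & forall t' y', S t' -> `|t - t'| < d ->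
    ball y d y' -> ball (sigma t y) e (sigma t' y').
Proof.
move=> St e e0; case: hds => _ _ csig.
have [d d0 H] := within_continuous_ball csig (x := (t, y)) St e0.
by exists d => // t' y' St' dt dy; apply: (H (t', y')) => //; split => //; apply/ball_realE.
Qed.

Lemma pi_cont t p : Sp t -> Xsp W p -> forall e, 0 < e ->
  exists2 d, 0 < d & forall z, Xsp W z -> ball p d z -> ball (pi t p) e (pi t z).
Proof.
move=> St Wp e e0.
have [d1 d10 H1] := phi_cont p.2 St Wp e0.
have [d2 d20 H2] := sigma_cont p.2 (proj1 St) e0.
exists (Num.min d1 d2); first by rewrite lt_min d10.
move=> z Wz [/ball_realE b1 b2]; split; rewrite /skew_prod /=.
  apply/ball_realE; apply: H1; rewrite ?subrr ?normr0 //.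
    by apply: lt_le_trans b1 _; rewrite ge_min lexx.
  by apply: le_ball b2; rewrite ge_min lexx.
apply: H2; rewrite ?subrr ?normr0 //; first by case: St.
by apply: le_ball b2; rewrite ge_min lexx orbT.
Qed.

Definition stays_near (y : Y) (w e d : R) := forall r v y', Sp r -> W v ->
  `|r| < d -> `|w - v| < d -> ball y d y' -> `|w - phi r v y'| < e.

Lemma stays_near_le y w e d d' : d' <= d -> stays_near y w e d -> stays_near y w e d'.
Proof.
move=> le H r v y' Sr Wv hr hv b.
by apply: H; [| |exact: lt_le_trans hr le|exact: lt_le_trans hv le|exact: le_ball le _ b].
Qed.

Lemma phi_near_identity y w e : W w -> 0 < e -> exists2 d, 0 < d & stays_near y w e d.
Proof.
move=> Ww e0; have Sp0 : Sp 0 by split; [exact: inS0|].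
have [d d0 H] := phi_cont y Sp0 Ww e0.
exists d => // r v y' Sr Wv hr hv b.
by move: (H r v y' Sr Wv); rewrite sub0r normrN phi0 //; apply.
Qed.

End SkewProduct.

Section OmegaLimit.
Variables (R : realType) (Y : pseudoMetricType R) (discrete : bool) (W : set R)
  (sigma : R -> Y -> Y) (phi : R -> R -> Y -> R) (x0 : R * Y).
Hypotheses (hY : hausdorff_space Y) (hds : dyn_system discrete sigma)
  (hcoc : cocycle discrete W sigma phi) (hx0 : Xsp W x0)
  (hpre : precompact_in (Xsp W) (semi_traj discrete (skew_prod sigma phi) x0)).
Local Notation Sp := (@inSp R discrete).
Local Notation pi := (skew_prod sigma phi).
Local Notation omx := (omega_lim discrete (Xsp W) pi x0).

Let hX : hausdorff_space (R * Y)%type.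
Proof. exact: hausdorff_prod (@Rhausdorff R) hY. Qed.

Lemma omega_cluster (s : nat -> R) : (forall n, Sp (s n) /\ n%:R <= s n) ->
  exists p, omx p /\
    forall e, 0 < e -> forall N, exists2 n, (N <= n)%N & ball p e (pi (s n) x0).
Proof.
move=> hs; have [K [cK KW trK]] := hpre.
have [|p [Kp Hp]] := compact_cluster_seq (z := fun n => pi (s n) x0) cK.
  by move=> n; apply: trK; exists (s n) => //; case: (hs n).
exists p; split => //; apply/omega_limP; split; first exact: KW.
move=> e e0 M; have [n Nn b] := Hp e e0 (Num.truncn M).+1.
exists (s n); have [Ssn nsn] := hs n; split => //.
exact: le_trans (le_truncnS Nn) nsn.
Qed.

Lemma omega_nonempty : omx !=set0.
Proof.
have [|p [omp _]] := omega_cluster (s := fun n => n%:R); last by exists p.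
by move=> n; split => //; exact: inSp_nat.
Qed.

Lemma omega_compact : compact omx.
Proof.
have [K [cK KW trK]] := hpre; have clK : closed K by exact: compact_closed.
have omK : omx `<=` K.
  move=> p /omega_limP [_ H]; apply: clK => B /nbhs_ballP [e e0 sB].
  have [t [St _ b]] := H e e0 0.
  by exists (pi t x0); split; [apply: trK; exists t|apply: sB].
apply: (subclosed_compact _ cK omK) => p clp; apply/omega_limP; split.
  apply/KW/clK => B nB; have [z [omz Bz]] := clp B nB.
  by exists z; split => //; apply: omK.
move=> e e0 M; have e20 : 0 < e / 2 by rewrite divr_gt0.
have [p' [/omega_limP [_ H] bp']] := clp _ (nbhsx_ballx _ _ e20).
have [t [St Mt b]] := H _ e20 M.
by exists t; split => //; rewrite (splitr e); apply: ball_triangle bp' b.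
Qed.

Lemma omega_pi t p : Sp t -> omx p -> omx (pi t p).
Proof.
move=> St /omega_limP [Wp H]; apply/omega_limP; split; first exact (piW hcoc St Wp).
move=> e e0 M; have [d d0 Hd] := pi_cont hds hcoc St Wp e0.
have [s [Ss Ms b]] := H d d0 M.
exists (t + s); split; first exact: inSpD.
  by rewrite -[M]add0r; apply: lerD => //; case: St.
by rewrite (piD hds hcoc) //; apply: Hd => //; exact: (piW hcoc).
Qed.

Lemma omega_pi_preimage t p : Sp t -> omx p -> exists2 p', omx p' & pi t p' = p.
Proof.
move=> [St t0] /omega_limP [Wp H].
have H' n : exists s, [/\ Sp s, n%:R + t <= s & ball p n.+1%:R^-1 (pi s x0)].
  by apply: H; rewrite invr_gt0 ltr0n.
pose sn n := projT1 (cid (H' n)).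
have snP n : [/\ Sp (sn n), n%:R + t <= sn n & ball p n.+1%:R^-1 (pi (sn n) x0)].
  exact: projT2 (cid (H' n)).
have Sp_snt n : Sp (sn n - t) /\ n%:R <= sn n - t.
  have [[Ss _] le _] := snP n; rewrite lerBrDr; split => //; split.
    exact: inSB.
  by rewrite subr_ge0; apply: le_trans le; rewrite lerDr.
have [p' [omp' Hp']] := omega_cluster Sp_snt.
exists p' => //; apply: cluster_ball_cvg_eq (fun n => pi (sn n) x0) _ _ hX _ _.
  by move=> n; case: (snP n).
move=> e e0 N; have Wp' : Xsp W p' by case: omp'.
have [d d0 Hd] := pi_cont hds hcoc (conj St t0) Wp' e0.
have [n Nn b] := Hp' d d0 N; exists n => //.
have [[Ssn _] _ _] := snP n.
have := Hd _ (piW hcoc (proj1 (Sp_snt n)) hx0) b.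
by rewrite -(piD hds hcoc) //; [rewrite addrC subrK|exact: (proj1 (Sp_snt n))].
Qed.

Lemma omega_invariant t : Sp t -> pi t @` omx = omx.
Proof.
move=> St; apply/seteqP; split; first by move=> _ [p omp <-]; exact: omega_pi.
by move=> p /(omega_pi_preimage St) [p' omp' <-]; exists p'.
Qed.

Lemma omega_snd : snd @` omx = omega_lim discrete setT sigma x0.2.
Proof.
apply/seteqP; split.
  move=> _ [p /omega_limP [_ H] <-]; apply/omega_limP; split => // e e0 M.
  by have [t [St Mt [_ b]]] := H e e0 M; exists t.
move=> y /omega_limP [_ H].
have H' n : exists s, [/\ Sp s, n%:R <= s & ball y n.+1%:R^-1 (sigma s x0.2)].
  by apply: H; rewrite invr_gt0 ltr0n.
pose sn n := projT1 (cid (H' n)).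
have snP n : [/\ Sp (sn n), n%:R <= sn n & ball y n.+1%:R^-1 (sigma (sn n) x0.2)].
  exact: projT2 (cid (H' n)).
have [|p [omp Hp]] := omega_cluster (s := sn); first by move=> n; case: (snP n).
exists p => //; apply: cluster_ball_cvg_eq (fun n => sigma (sn n) x0.2) _ _ hY _ _.
  by move=> n; case: (snP n).
by move=> e e0 N; have [n Nn [_ b]] := Hp e e0 N; exists n.
Qed.

End OmegaLimit.

Section PeriodicBase.
Variables (R : realType) (Y : pseudoMetricType R) (discrete : bool)
  (sigma : R -> Y -> Y) (tau : R) (y0 q : Y).
Hypotheses (hds : dyn_system discrete sigma) (htauS : inSp discrete tau).
Local Notation Sp := (@inSp R discrete).

Lemma periodic_pt_natM q' : periodic_pt sigma tau q' ->
  forall k : nat, sigma (k%:R * tau) q' = q'.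
Proof.
move=> hq'; elim => [|k IH]; first by rewrite mul0r (sigma0 hds).
rewrite mulrSr mulrDl mul1r (sigmaD hds) ?hq' //; last by case: htauS.
by apply: inS_natM; case: htauS.
Qed.

Lemma asympt_periodic_limit : hausdorff_space Y -> 0 < tau ->
  asympt_periodic discrete sigma tau y0 ->
  (fun k : nat => sigma (k%:R * tau) y0) @ \oo --> q ->
  periodic_pt sigma tau q /\ forall e, 0 < e -> exists T, forall t, Sp t -> T <= t ->
    ball (sigma t y0) e (sigma t q).
Proof.
move=> hY tau0 [q' [pq' H]] cvq; suff <- : q' = q by [].
apply: hausdorff_ball_eq => // e e0; have e20 : 0 < e / 2 by rewrite divr_gt0.
have [T HT] := H _ e20.
have [N HN] : exists N, forall k, (N <= k)%N -> ball q (e / 2) (sigma (k%:R * tau) y0).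
  by apply/near_infty_natP; move/cvg_ballP: cvq; apply.
pose k := maxn N (Num.truncn (T / tau)).+1.
have kT : T <= k%:R * tau by rewrite -ler_pdivrMr //; apply: le_truncnS; rewrite leq_maxr.
have := HT _ (inSp_natM k htauS) kT; rewrite (periodic_pt_natM pq') => b1.
have b2 := HN k (leq_maxl _ _).
by rewrite (splitr e); apply: ball_triangle (ball_sym b1) (ball_sym b2).
Qed.

Lemma near_periodic_along_period (rho T t : R) : periodic_pt sigma tau q ->
  (forall t, Sp t -> T <= t -> ball (sigma t y0) rho (sigma t q)) ->
  Sp t -> T <= t -> ball q rho (sigma t y0) ->
  forall k : nat, ball q (rho + rho + rho) (sigma (t + k%:R * tau) y0).
Proof.
move=> hper HT St Tt b k.
have Stk : Sp (t + k%:R * tau) by apply/inSpD/inSp_natM.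
have Ttk : T <= t + k%:R * tau.
  by apply: le_trans Tt _; rewrite lerDl; case: (inSp_natM k htauS).
have := HT _ Stk Ttk; rewrite [sigma _ q](sigmaD hds) ?(periodic_pt_natM hper).
- by move=> b'; exact: ball_triangle (ball_triangle b (HT _ St Tt)) (ball_sym b').
- by case: St.
- by apply: inS_natM; case: htauS.
Qed.

End PeriodicBase.

Section MonotoneFibre.
Variables (R : realType) (Y : pseudoMetricType R) (discrete : bool) (W : set R)
  (sigma : R -> Y -> Y) (phi : R -> R -> Y -> R) (tau : R) (x0 : R * Y) (q : Y).
Hypotheses (hW : is_interval W) (hds : dyn_system discrete sigma)
  (hcoc : cocycle discrete W sigma phi) (hmon : monotone_cocycle discrete W phi)
  (htauS : inSp discrete tau) (htau0 : 0 < tau) (hx0 : Xsp W x0)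
  (hper : periodic_pt sigma tau q)
  (hasy : forall e, 0 < e -> exists T, forall t, inSp discrete t -> T <= t ->
     ball (sigma t x0.2) e (sigma t q)).
Local Notation Sp := (@inSp R discrete).
Local Notation pi := (skew_prod sigma phi).
Local Notation ut t := (phi t x0.1 x0.2).
Local Notation yt t := (sigma t x0.2).

Lemma omega_returns_near u T e : omega_lim discrete (Xsp W) pi x0 (u, q) -> 0 < e ->
  forall M, exists2 t, [/\ Sp t, T <= t, `|u - ut t| < e & ball q e (yt t)] & M <= t.
Proof.
move=> /omega_limP [_ omu] e0 M; have [t [St]] := omu e e0 (Num.max M T).
by rewrite ge_max => /andP [Mt Tt] [/ball_realE ut_near yt_near]; exists t.
Qed.

Section Signed.
(* The sign [s] lets one argument treat drift to the right and to the left. *)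
Variable s : R.
Hypothesis hs : s = 1 \/ s = -1.

Lemma signed_lt_norm (a e : R) : `|a| < e -> - e < s * a /\ s * a < e.
Proof.
rewrite ltr_norml => /andP [h1 h2].
by case: hs => ->; rewrite ?mul1r ?mulN1r; split; lra.
Qed.

Lemma signed_monotone t v1 v2 y : Sp t -> W v1 -> W v2 ->
  0 <= s * (v1 - v2) -> 0 <= s * (phi t v1 y - phi t v2 y).
Proof.
move=> St W1 W2; case: hs => ->; rewrite ?mul1r ?mulN1r.
  by rewrite !subr_ge0; apply: hmon.
by rewrite !oppr_ge0 !subr_le0; apply: hmon.
Qed.

Definition drives_past (c w d : R) := forall v y, W v -> `|w - v| < d -> ball q d y ->
  0 < s * (phi tau v y - c).

Lemma drives_past_le c w d d' : d' <= d -> drives_past c w d -> drives_past c w d'.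
Proof.
move=> le H v y Wv hv b; apply: H Wv (lt_le_trans hv le) _.
exact: le_ball le _ b.
Qed.

Lemma drives_past_near c w : W w -> 0 < s * (phi tau w q - c) ->
  exists2 d, 0 < d & drives_past c w d.
Proof.
move=> Ww hw; have [d d0 H] := phi_cont hcoc q htauS Ww hw.
exists d => // v y Wv hv b.
have := H tau v y htauS Wv; rewrite subrr normr0 => /(_ d0 hv b) /signed_lt_norm.
by rewrite !mulrBr; lra.
Qed.

Lemma drives_past_beyond c d v y : 0 < d -> W c -> drives_past c c d -> W v ->
  ball q d y -> 0 <= s * (v - c) -> 0 < s * (phi tau v y - c).
Proof.
move=> d0 Wc hc Wv b vc.
have := hc c y Wc; rewrite subrr normr0 => /(_ d0 b).
by have := signed_monotone y htauS Wv Wc vc; rewrite !mulrBr; lra.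
Qed.

Lemma threshold_between u : W u -> 0 < s * (phi tau u q - u) ->
  exists c d, [/\ 0 < d, W c, s * c = s * u + d,
    0 < s * (phi tau c q - c) & 0 < s * (phi tau u q - c)].
Proof.
move=> Wu drift; set fu := phi tau u q in drift *.
have Wfu : W fu by exact: (phiW hcoc).
have s2 : s * s = 1 by case: hs => ->; rewrite ?mulr1 ?mulrNN ?mulr1.
have [d1 d10 H1] := phi_cont hcoc q htauS Wu (divr_gt0 drift (ltr0n R 2)).
pose d := Num.min (d1 / 2) (s * (fu - u) / 4).
have d0 : 0 < d by rewrite lt_min !divr_gt0.
have dd1 : d <= d1 / 2 by rewrite ge_min lexx.
have dfu : d <= s * (fu - u) / 4 by rewrite ge_min lexx orbT.
exists (u + s * d), d; have sc : s * (u + s * d) = s * u + d.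
  by rewrite mulrDr mulrA s2 mul1r.
have Wc : W (u + s * d).
  move: drift dfu; case: hs => ->; rewrite ?mul1r ?mulN1r => drift dfu.
    by apply: (hW Wu Wfu); apply/andP; split; lra.
  by apply: (hW Wfu Wu); apply/andP; split; lra.
have [h1 h2] : - (s * (fu - u) / 2) < s * (fu - phi tau (u + s * d) q) /\
    s * (fu - phi tau (u + s * d) q) < s * (fu - u) / 2.
  apply/signed_lt_norm/H1; rewrite ?subrr ?normr0 //; last exact: ballxx.
  have -> : `|u - (u + s * d)| = d.
    rewrite opprD addrA subrr sub0r normrN normrM (gtr0_norm d0).
    by case: hs => ->; rewrite ?normr1 ?normrN1 mul1r.
  by apply: le_lt_trans dd1 _; rewrite ltr_pdivrMr //; lra.
move: drift dfu h1 h2; rewrite !mulrBr sc => drift dfu h1 h2.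
by split => //; lra.
Qed.

Let W_orbit t : Sp t -> W (ut t).
Proof. by move=> St; apply: (phiW hcoc). Qed.

Lemma trap_along_orbit u c d t : 0 < d -> W c ->
  drives_past c c d -> drives_past c u d -> Sp t -> `|u - ut t| < d ->
  (forall k : nat, ball q d (yt (t + k%:R * tau))) ->
  forall k : nat, 0 < s * (ut (t + k.+1%:R * tau) - c).
Proof.
move=> d0 Wc hc hu St near_u near_q; elim => [|k IH].
  rewrite mul1r [t + tau]addrC (phiD hcoc) //; apply: hu => //.
    exact: W_orbit.
  by have := near_q 0%N; rewrite mul0r addr0.
have Stk : Sp (t + k.+1%:R * tau) by apply/inSpD/inSp_natM.
have -> : t + k.+2%:R * tau = tau + (t + k.+1%:R * tau).
  by rewrite [k.+2%:R]mulrSr; ring.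
rewrite (phiD hcoc) //; apply: drives_past_beyond d0 Wc hc _ (near_q k.+1) (ltW IH).
exact: W_orbit.
Qed.

Lemma no_return_after_crossing u c d e t1 b : s * c = s * u + d -> W c ->
  stays_near discrete W phi q u (d / 2) e -> stays_near discrete W phi q c (d / 2) e ->
  Sp t1 -> Sp b -> `|b - t1| < e -> 0 < s * (ut t1 - c) ->
  ball q e (yt t1) -> ball q e (yt b) -> `|u - ut b| < e -> `|u - ut b| < d / 2 ->
  False.
Proof.
move=> sc Wc near_u near_c St1 Sb hr past y1 yb ub_e ub_d.
have Wt1 : W (ut t1) by exact: W_orbit.
have Wb : W (ut b) by exact: W_orbit.
have [ub1 ub2] := signed_lt_norm ub_d.
case: (lerP 0 (b - t1)) => r0.
  have Sr : Sp (b - t1) by split => //; apply: inSB; [case: Sb|case: St1].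
  have ubE : ut b = phi (b - t1) (ut t1) (yt t1).
    by rewrite -[in LHS](subrK t1 b) [in LHS](phiD hcoc).
  have := signed_monotone (yt t1) Sr Wt1 Wc (ltW past).
  have e0 : 0 < e by apply: le_lt_trans (normr_ge0 (b - t1)) hr.
  have := near_c _ c (yt t1) Sr Wc hr; rewrite subrr normr0 => /(_ e0 y1) /signed_lt_norm [].
  by move: ub1 ub2 past; rewrite -ubE !mulrBr sc; lra.
have Sr : Sp (t1 - b) by split; [apply: inSB; [case: St1|case: Sb]|lra].
have u1E : ut t1 = phi (t1 - b) (ut b) (yt b).
  by rewrite -[in LHS](subrK b t1) [in LHS](phiD hcoc).
have /signed_lt_norm [] : `|u - phi (t1 - b) (ut b) (yt b)| < d / 2.
  by apply: near_u => //; rewrite distrC.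
by move: past; rewrite -u1E !mulrBr sc; lra.
Qed.

Lemma no_drift_on_omega_fibre u : omega_lim discrete (Xsp W) pi x0 (u, q) ->
  ~ 0 < s * (phi tau u q - u).
Proof.
move=> omu drift; have Wu : W u by case: omu.
have [c [d [d0 Wc sc cdrift udrift]]] := threshold_between Wu drift.
have [d1 d10 hc] := drives_past_near Wc cdrift.
have [d2 d20 hu] := drives_past_near Wu udrift.
have d2_gt0 : 0 < d / 2 by rewrite divr_gt0.
have [d3 d30 near_u] := phi_near_identity hcoc q Wu d2_gt0.
have [d4 d40 near_c] := phi_near_identity hcoc q Wc d2_gt0.
pose e := Num.min (Num.min d1 d2) (Num.min d3 d4).
have e0 : 0 < e by rewrite !lt_min d10 d20 d30 d40.
have [e1 e2 e3 e4] : [/\ e <= d1, e <= d2, e <= d3 & e <= d4].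
  by rewrite !ge_min !lexx !orbT.
pose rho := e / 3; have rho0 : 0 < rho by rewrite divr_gt0.
have rho3 : rho + rho + rho = e by rewrite /rho; field.
have rho_e : rho <= e by rewrite -rho3 -addrA lerDl; lra.
pose eta := Num.min rho (d / 2); have eta0 : 0 < eta by rewrite lt_min rho0.
have [eta_rho eta_d] : eta <= rho /\ eta <= d / 2 by rewrite !ge_min !lexx orbT.
have [T HT] := hasy rho0.
have [D [AD gapD]] := unbounded_spaced_seq (ltW htau0) (omega_returns_near T omu eta0).
have [i [j [k hr]]] := spaced_seq_near_multiple htau0 e0 gapD.
have [Sa Ta ua ya] := AD i; have [Sb Tb ub yb] := AD j.
have near_q := near_periodic_along_period hds htauS hper HT Sa Ta (le_ball eta_rho ya).
rewrite rho3 in near_q.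
have eta_e : eta <= e := le_trans eta_rho rho_e.
have ua_e : `|u - ut (D i)| < e := lt_le_trans ua eta_e.
have past := trap_along_orbit e0 Wc (drives_past_le e1 hc) (drives_past_le e2 hu)
  Sa ua_e near_q k.
apply: (no_return_after_crossing sc Wc (stays_near_le e3 near_u)
  (stays_near_le e4 near_c) _ Sb hr past (near_q k.+1)).
- exact/inSpD/inSp_natM.
- exact: (le_ball eta_e yb).
- exact: lt_le_trans ub eta_e.
- exact: lt_le_trans ub eta_d.
Qed.

End Signed.

Lemma omega_fibre_fixed x : omega_lim discrete (Xsp W) pi x0 x -> x.2 = q -> pi tau x = x.
Proof.
case: x => u y omu /= yq; subst y; rewrite /skew_prod /= (hper : sigma tau q = q).
congr pair; case: (ltrgtP (phi tau u q) u) => // h; exfalso.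
  by apply: (no_drift_on_omega_fibre (or_intror erefl) omu); rewrite mulN1r oppr_gt0 subr_lt0.
by apply: (no_drift_on_omega_fibre (or_introl erefl) omu); rewrite mul1r subr_gt0.
Qed.

End MonotoneFibre.

Unset Implicit Arguments.

Theorem mainTheorem6 (R : realType) (Y : completePseudoMetricType R)
  (discrete : bool) (W : set R) (sigma : R -> Y -> Y) (phi : R -> R -> Y -> R)
  (tau : R) (x0 : R * Y) (q : Y) :
  hausdorff_space Y ->
  is_interval W ->
  dyn_system discrete sigma ->
  cocycle discrete W sigma phi ->
  monotone_cocycle discrete W phi ->
  inSp discrete tau -> 0 < tau ->
  (forall (k : nat) u1 u2 y, W u1 -> W u2 -> u1 < u2 ->
      phi (k%:R * tau) u1 y < phi (k%:R * tau) u2 y) ->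
  Xsp W x0 ->
  precompact_in (Xsp W) (semi_traj discrete (skew_prod sigma phi) x0) ->
  asympt_periodic discrete sigma tau x0.2 ->
  (fun k : nat => sigma (k%:R * tau) x0.2) @ \oo --> q ->
  let pi := skew_prod sigma phi in
  let om := omega_lim discrete (Xsp W) pi x0 in
  let omt := om `&` [set x | x.2 = q] in
  let P := pi tau in
  [/\ om !=set0 /\ compact om /\
        (forall t, inSp discrete t -> pi t @` om = om),
      snd @` om = omega_lim discrete setT sigma x0.2,
      P @` omt = omt
    & forall x, omt x -> P x = x].
Proof.
move=> hY hW hds hcoc hmon htauS htau0 _ hx0 hpre hap hq pi om omt P.
rewrite /P /omt /om /pi.
have [hper hasy] := asympt_periodic_limit hds htauS hY htau0 hap hq.
have fixed := omega_fibre_fixed hW hds hcoc hmon htauS htau0 hx0 hper hasy.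
split.
- split; first exact: omega_nonempty hpre.
  by split; [exact: omega_compact|exact: omega_invariant].
- exact: omega_snd.
- apply/seteqP; split => [_ [x [omx xq] <-]|x [omx xq]]; first by rewrite fixed.
  by exists x; rewrite ?fixed.
- by move=> x [omx xq]; exact: fixed.
Qed.
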